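(* Consider the load-balancing system described in the context under any policy in $\Pi$, with $S$ the stationary state, and $\mu_{\max}=\max\{\mu_1,\mu_2\}$. Then $$\mathbb P\left(S_{1,2}\le \frac{p}{\mu_2}+\frac{\log N}{2\sqrt N}\right)\ge 1-e^{-\frac{\mu_1\mu_2\log^2N}{40\mu_{\max}}}.$$
   Context: System: $N$ identical servers. Jobs arrive according to a Poisson process of rate $\lambda N$ with $\lambda=1-N^{-\alpha}$, $0<\alpha<0.5$. Service times are Coxian-2 with parameters $(\mu_1,\mu_2,p)$, $\mu_1,\mu_2>0$, $0\le p<1$: a job in service completes phase 1 at rate $\mu_1$; then with probability $1-p$ it leaves, and with probability $p$ it enters phase 2, completed at rate $\mu_2$. It is assumed that $\frac{1}{\mu_1}+\frac{p}{\mu_2}=1$. Each server holds at most $b$ jobs (one in service, $b-1$ in buffer); jobs routed to a full server are discarded. $S_{i,m}(t)$ is the fraction of servers with at least $i$ jobs whose job in service is in phase $m$, $S_i=S_{i,1}+S_{i,2}$; the state space is $\mathcal S^{(N)}=\{s\in\mathbb R^{b\times2}: 1\ge s_{1,m}\ge\cdots\ge s_{b,m}\ge0,\ s_{1,1}+s_{1,2}\le1,\ Ns_{i,m}\in\mathbb N\}$, with $s_i=s_{i,1}+s_{i,2}$. Policies dispatch based on the state and make the CTMC irreducible; $S$ denotes the stationary state. $A_1(s)$ is the probability that an arriving job is routed to a busy server in state $s$. $\Pi$ is the set of policies with $A_1(s)\le 1/\sqrt N$ for all $s\in\mathcal S^{(N)}$ with $s_1\le\lambda+\frac{1+\mu_1+\mu_2}{\min\{(1-p)\mu_1,\mu_2\}}\frac{\log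 N}{\sqrt N}$. *)

From HB Require Import structures.
From mathcomp Require Import all_boot all_order all_algebra.
From mathcomp Require Import all_classical all_reals all_analysis.
Set Implicit Arguments. Unset Strict Implicit. Unset Printing Implicit Defensive.
Import Order.TTheory GRing.Theory Num.Theory.
Local Open Scope ring_scope.

(* Server classes of busy servers: (j, m) = server holding exactly j+1 jobs
   whose job in service is in phase m+1 (j < b, m < 2). *)
Definition cls (b : nat) := ('I_b * 'I_2)%type.
Definition ph1 : 'I_2 := ord0.
Definition ph2 : 'I_2 := ord_max.

(* This is in bijection with
   S^(N): N s_{i,m} = sum_{j >= i} (number of servers with exactly j jobs and
   phase m). *)
Definition state (N b : nat) :=
  {x : {ffun cls b -> 'I_N.+1} | (\sum_k (x k : nat) <= N)%N}.

Definition cnt N b (x : state N b) (k : cls b) : nat := val x k.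
Definition idle N b (x : state N b) : nat := (N - \sum_k cnt x k)%N.

Definition Sim (R : realType) N b (x : state N b) (i : nat) (m : 'I_2) : R :=
  (\sum_(k : cls b | (i <= k.1.+1)%N && (k.2 == m)) cnt x k)%:R / N%:R.
Definition S1 (R : realType) N b (x : state N b) : R := Sim R x 1 ph1 + Sim R x 1 ph2.

(* a server of class src (None = idle) turns into class dst (None = idle) *)
Definition moves N b (x y : state N b) (src dst : option (cls b)) : bool :=
  [forall k, cnt y k == (cnt x k - (src == Some k) + (dst == Some k))%N].

(* class reached by a new job at an idle server: 1 job, phase 1 *)
Definition newjob b : option (cls b) := omap (fun j => (j, ph1)) (insub 0%N).
(* class after an arrival to a server of class k (k.1.+1 < b) *)
Definition up b (k : cls b) : option (cls b) :=
  omap (fun j => (j, k.2)) (insub k.1.+1).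
(* class after a departure from a server holding j+1 jobs: the next job
   starts service in phase 1 *)
Definition down b (j : 'I_b) : option (cls b) :=
  if (j : nat) == 0%N then None else omap (fun j' => (j', ph1)) (insub j.-1).

(* Dispatching policy: A x c = probability that a job arriving in state x is
   routed to a server of class c (None = idle server). *)
Definition policy_ok (R : realType) N b (A : state N b -> option (cls b) -> R) :=
  forall x, (forall c, 0 <= A x c) /\ (\sum_c A x c = 1) /\
    (0 < A x None -> (0 < idle x)%N) /\
    (forall k, 0 < A x (Some k) -> (0 < cnt x k)%N).

Definition A1 (R : realType) N b (A : state N b -> option (cls b) -> R) x : R :=
  \sum_(k : cls b) A x (Some k).

(* Off-diagonal transition rates of the CTMC.  Arrivals at rate lam*N;
   jobs routed to full servers (b jobs) are discarded (no state change). *)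
Definition rate (R : realType) N b (lam mu1 mu2 p : R)
  (A : state N b -> option (cls b) -> R) (x y : state N b) : R :=
  if y == x then 0 else
    lam * N%:R * A x None * (moves x y None (newjob b))%:R
  + \sum_(k : cls b | (k.1.+1 < b)%N)
      lam * N%:R * A x (Some k) * (moves x y (Some k) (up k))%:R
  + \sum_(j : 'I_b) mu1 * (cnt x (j, ph1))%:R *
      (p * (moves x y (Some (j, ph1)) (Some (j, ph2)))%:R
       + (1 - p) * (moves x y (Some (j, ph1)) (down j))%:R)
  + \sum_(j : 'I_b) mu2 * (cnt x (j, ph2))%:R *
      (moves x y (Some (j, ph2)) (down j))%:R.

Definition irreducible (R : realType) N b (q : state N b -> state N b -> R) :=
  forall x y, connect [rel u v | 0 < q u v] x y.

Definition stationary (R : realType) N b (q : state N b -> state N b -> R)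
  (pi : state N b -> R) :=
  (forall x, 0 <= pi x) /\ (\sum_x pi x = 1) /\
  (forall y, \sum_x pi x * q x y = pi y * \sum_z q y z).

Definition in_Pi (R : realType) N b (lam mu1 mu2 p : R)
  (A : state N b -> option (cls b) -> R) :=
  forall x, S1 R x <= lam + (1 + mu1 + mu2) / Num.min ((1 - p) * mu1) mu2
                            * ln (N%:R : R) / Num.sqrt (N%:R)
            -> A1 A x <= 1 / Num.sqrt (N%:R).

From Pilot Require Import Defs.
From HB Require Import structures.
From mathcomp Require Import all_boot all_order all_algebra.
From mathcomp Require Import all_classical all_reals all_analysis.
From mathcomp Require Import zify ring lra.
Set Implicit Arguments. Unset Strict Implicit. Unset Printing Implicit Defensive.
Import Order.TTheory GRing.Theory Num.Theory.
Local Open Scope ring_scope.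

(* Let n1(x), n2(x) be the numbers of servers whose job in service is in phase
   1, 2, and f(x) = exp(th n2(x)).  Arrivals never change n2, a phase-1
   completion raises it by one with probability p, and every phase-2 server
   lowers it at rate mu2, so whatever the dispatching policy
     G f = f ((e^th - 1) mu1 p n1 + (e^-th - 1) mu2 n2),   n1 + n2 <= N.
   Stationarity gives E[G f(S)] = 0, which bounds the f-tilted mean of n2 by
   c = N (p/mu2 + (e^th - 1)/4); by 1 + y <= e^y this yields E[f(S)] <= e^(th c),
   and a Chernoff bound with th = log N / (4 sqrt N) gives the tail. *)

Section States.
Variables N b : nat.
Implicit Types (x y : state N b) (s d : option (cls b)) (m : 'I_2).

Definition nphase x m : nat := \sum_(j : 'I_b) cnt x (j, m).

Definition in_phase m s : nat := if s is Some k then k.2 == m else false.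

Lemma nphase_ph1_ph2_le x : (nphase x ph1 + nphase x ph2 <= N)%N.
Proof.
rewrite /nphase -big_split /=.
suff -> : (\sum_(j : 'I_b) (cnt x (j, ph1) + cnt x (j, ph2)) = \sum_k cnt x k)%N
  by exact: valP x.
rewrite (eq_bigr (fun k => cnt x (k.1, k.2))); last by case.
rewrite -(pair_bigA _ (fun j m => cnt x (j, m))) /=.
apply: eq_bigr => j _; rewrite big_ord_recl big_ord1.
by congr (_ + cnt x (j, _))%N; apply: val_inj.
Qed.

Lemma Sim1E (R : realType) x m : Sim R x 1 m = (nphase x m)%:R / N%:R.
Proof.
rewrite /Sim; congr (_%:R / _).
rewrite (eq_bigl (fun k : cls b => xpredT k.1 && (k.2 == m))) //.
rewrite (eq_bigr (fun k => cnt x (k.1, k.2))); last by case.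
rewrite -(pair_big_dep xpredT (fun _ m' => m' == m) (fun j m' => cnt x (j, m'))).
by apply: eq_bigr => j _; rewrite big_pred1_eq.
Qed.

Lemma sum_eq_Some_phase s m :
  (\sum_(j : 'I_b) (s == Some (j, m)) = in_phase m s)%N.
Proof.
case: s => [[j0 m0]|] /=; last by rewrite big1.
have [->|ne] := eqVneq m0 m.
- rewrite (bigD1 j0) //= eqxx big1 // => j nj.
  by case: eqP => // [[e]]; rewrite e eqxx in nj.
- by rewrite big1 // => j _; case: eqP => // [[_ e]]; rewrite e eqxx in ne.
Qed.

Lemma sum_eq_Some s : (\sum_(k : cls b) (s == Some k) = (s != None))%N.
Proof.
case: s => [k0|] /=; last by rewrite big1.
rewrite (bigD1 k0) //= eqxx big1 // => k nk.
by case: eqP => // [[e]]; rewrite e eqxx in nk.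
Qed.

Lemma sum_subDn (I : finType) (c s d : I -> nat) : (forall i, s i <= c i)%N ->
  (\sum_i (c i - s i + d i) + \sum_i s i = \sum_i c i + \sum_i d i)%N.
Proof.
by move=> le_sc; rewrite -!big_split /=; apply: eq_bigr => i _; have := le_sc i; lia.
Qed.

Lemma moves_nphase x y s d m : moves x y s d ->
  (forall k, s = Some k -> 0 < cnt x k)%N ->
  (nphase y m + in_phase m s = nphase x m + in_phase m d)%N.
Proof.
move=> /forallP xy src_x.
rewrite /nphase (eq_bigr _ (fun j _ => eqP (xy (j, m)))) -!sum_eq_Some_phase.
apply: (sum_subDn (c := fun j => cnt x (j, m))) => j.
by case: eqP => // /src_x.
Qed.

Lemma moves_uniq x y y' s d : moves x y s d -> moves x y' s d -> y = y'.
Proof.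
move=> /forallP xy /forallP xy'; apply/val_inj/ffunP => k; apply: val_inj.
exact: etrans (eqP (xy k)) (esym (eqP (xy' k))).
Qed.

Lemma moves_exists x k d : (0 < cnt x k)%N -> exists y, moves x y (Some k) d.
Proof.
move=> x_k; pose g k' := (cnt x k' - (Some k == Some k') + (d == Some k'))%N.
have sum_g : (\sum_k' g k' <= N)%N.
  have le_src k' : ((Some k == Some k') <= cnt x k')%N by case: eqP => // [[<-]].
  have := @sum_subDn (cls b) _ _ (fun k' => (d == Some k') : nat) le_src.
  rewrite !sum_eq_Some /= => E; rewrite -(leq_add2r 1) E.
  by apply: leq_add; [exact: (valP x) | case: (d != None)].
have g_lt k' : (g k' < N.+1)%N.
  by rewrite ltnS (leq_trans _ sum_g) // (bigD1 k') //= leq_addr.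
pose y : {ffun cls b -> 'I_N.+1} := [ffun k' => inord (g k')].
have sum_y : (\sum_k' (y k' : nat) <= N)%N.
  by under eq_bigr do rewrite ffunE inordK //.
exists (exist (fun f : {ffun cls b -> 'I_N.+1} => \sum_k' (f k' : nat) <= N)%N y sum_y).
by apply/forallP => k'; rewrite /cnt /= ffunE inordK.
Qed.

End States.

Lemma in_phase_ph2_newjob b : in_phase ph2 (newjob b) = 0%N.
Proof. by rewrite /newjob; case: insub. Qed.

Lemma in_phase_ph2_down b (j : 'I_b) : in_phase ph2 (Defs.down j) = 0%N.
Proof. by rewrite /Defs.down; case: ifP => // _; case: insub. Qed.

Lemma in_phase_up b (k : cls b) m :
  (k.1.+1 < b)%N -> in_phase m (Defs.up k) = in_phase m (Some k).
Proof. by move=> kb; rewrite /Defs.up (insubT (fun i => i < b)%N kb). Qed.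

Section Generator.
Variables (R : realType) (N b : nat).
Implicit Types (x y : state N b) (s d : option (cls b)) (f : state N b -> R).

Definition generator (q : state N b -> state N b -> R) f x : R :=
  \sum_y q x y * (f y - f x).

Lemma stationary_generator_mean q pi f :
  stationary q pi -> \sum_x pi x * generator q f x = 0.
Proof.
case=> _ [_ balance].
transitivity (\sum_x \sum_y pi x * q x y * f y
              - \sum_x pi x * f x * \sum_y q x y).
  rewrite -sumrB; apply: eq_bigr => x _.
  by rewrite !big_distrr -sumrB; apply: eq_bigr => y _ /=; ring.
rewrite exchange_big /= -sumrB big1 // => y _.
by rewrite -big_distrl /= balance; ring.
Qed.

Definition jump_gain f x s d : R := \sum_y (moves x y s d)%:R * (f y - f x).

Lemma jump_gain_moves f x y s d : moves x y s d -> jump_gain f x s d = f y - f x.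
Proof.
move=> xy; rewrite /jump_gain (bigD1 y) //= xy mul1r big1 ?addr0 // => y' ny'.
case: (boolP (moves x y' s d)) => [xy'|_]; last by rewrite mul0r.
by rewrite (moves_uniq xy' xy) eqxx in ny'.
Qed.

Lemma jump_gain_eq0 f x s d :
  (forall y, moves x y s d -> f y = f x) -> jump_gain f x s d = 0.
Proof.
move=> fE; apply: big1 => y _.
by case: (boolP (moves x y s d)) => [/fE ->|_]; rewrite ?subrr ?mulr0 ?mul0r.
Qed.

Definition exp_nphase2 (th : R) x : R := expR (th * (nphase x ph2)%:R).

Lemma exp_nphase2_moves th x y s d : moves x y s d ->
  (forall k, s = Some k -> 0 < cnt x k)%N ->
  exp_nphase2 th y
  = exp_nphase2 th x * expR (th * ((in_phase ph2 d)%:R - (in_phase ph2 s)%:R)).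
Proof.
move=> xy src_x; have /(congr1 (fun n => n%:R : R)) := moves_nphase ph2 xy src_x.
rewrite !natrD => E; rewrite /exp_nphase2 -expRD; congr expR.
by rewrite -[(nphase y ph2)%:R](addrK (in_phase ph2 s)%:R) E; ring.
Qed.

Lemma jump_gain_exp_nphase2 th x k d : (0 < cnt x k)%N ->
  jump_gain (exp_nphase2 th) x (Some k) d
  = exp_nphase2 th x
    * (expR (th * ((in_phase ph2 d)%:R - (in_phase ph2 (Some k))%:R)) - 1).
Proof.
move=> x_k; have [y xy] := moves_exists d x_k.
by rewrite (jump_gain_moves _ xy) (exp_nphase2_moves _ xy) ?mulrBr ?mulr1 // => _ [<-].
Qed.

Lemma jump_gain_exp_nphase2_eq0 th x s d :
  (forall k, s = Some k -> 0 < cnt x k)%N -> in_phase ph2 d = in_phase ph2 s ->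
  jump_gain (exp_nphase2 th) x s d = 0.
Proof.
move=> src_x ds; apply: jump_gain_eq0 => y xy.
by rewrite (exp_nphase2_moves _ xy src_x) ds subrr mulr0 expR0 mulr1.
Qed.

End Generator.

Section Model.
Variables (R : realType) (N b : nat) (lam mu1 mu2 p : R).
Variable A : state N b -> option (cls b) -> R.
Implicit Types (x : state N b) (f : state N b -> R).

Lemma generator_rateE f x :
  generator (rate lam mu1 mu2 p A) f x =
    lam * N%:R * A x None * jump_gain f x None (newjob b)
  + \sum_(k : cls b | (k.1.+1 < b)%N)
      lam * N%:R * A x (Some k) * jump_gain f x (Some k) (Defs.up k)
  + \sum_(j : 'I_b) mu1 * (cnt x (j, ph1))%:R *
      (p * jump_gain f x (Some (j, ph1)) (Some (j, ph2))
       + (1 - p) * jump_gain f x (Some (j, ph1)) (Defs.down j))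
  + \sum_(j : 'I_b) mu2 * (cnt x (j, ph2))%:R *
      jump_gain f x (Some (j, ph2)) (Defs.down j).
Proof.
rewrite /generator /jump_gain.
pose mv s d y : R := (moves x y s d)%:R * (f y - f x).
have rateE y : rate lam mu1 mu2 p A x y * (f y - f x) =
    lam * N%:R * A x None * mv None (newjob b) y
  + \sum_(k : cls b | (k.1.+1 < b)%N)
      lam * N%:R * A x (Some k) * mv (Some k) (Defs.up k) y
  + \sum_(j : 'I_b) mu1 * (cnt x (j, ph1))%:R *
      (p * mv (Some (j, ph1)) (Some (j, ph2)) y
       + (1 - p) * mv (Some (j, ph1)) (Defs.down j) y)
  + \sum_(j : 'I_b) mu2 * (cnt x (j, ph2))%:R * mv (Some (j, ph2)) (Defs.down j) y.
  rewrite /rate /mv; case: eqP => [->|_].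
    by rewrite subrr !mulr0 !big1 ?addr0 // => *; rewrite !mulr0 ?addr0 ?mulr0.
  rewrite !mulrDl !big_distrl /=.
  by congr (_ + _ + _ + _); [ring | apply: eq_bigr => *; ring ..].
rewrite (eq_bigr _ (fun y _ => rateE y)) !big_split /=.
congr (_ + _ + _ + _); first by rewrite big_distrr.
all: rewrite exchange_big /=; apply: eq_bigr => j _.
all: by rewrite -big_distrr /= ?big_split -?big_distrr.
Qed.

Lemma generator_rate_exp_nphase2 th x : policy_ok A ->
  generator (rate lam mu1 mu2 p A) (exp_nphase2 th) x =
  exp_nphase2 th x * ((expR th - 1) * mu1 * p * (nphase x ph1)%:R
                      + (expR (- th) - 1) * mu2 * (nphase x ph2)%:R).
Proof.
move=> /(_ x) [A_ge0 [_ [_ A_src]]].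
rewrite generator_rateE jump_gain_exp_nphase2_eq0 ?in_phase_ph2_newjob // mulr0 add0r.
rewrite big1 ?add0r => [|k kb]; last first.
  have [->|Ak] := eqVneq (A x (Some k)) 0; first by rewrite mulr0 mul0r.
  rewrite jump_gain_exp_nphase2_eq0 ?mulr0 ?in_phase_up // => _ [<-].
  by apply: A_src; rewrite lt_def Ak A_ge0.
rewrite /nphase !natr_sum !mulr_sumr mulrDr !mulr_sumr -!big_split /=.
apply: eq_bigr => j _.
congr (_ + _).
  have [-> | x_j] := posnP (cnt x (j, ph1)); first by rewrite !mulr0 mul0r.
  rewrite !jump_gain_exp_nphase2 //= in_phase_ph2_down subr0 subrr mulr1 mulr0 expR0.
  ring.
have [-> | x_j] := posnP (cnt x (j, ph2)); first by rewrite !mulr0 mul0r.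
rewrite jump_gain_exp_nphase2 //= in_phase_ph2_down sub0r mulrN1; ring.
Qed.

End Model.

Section ExponentialTilting.
Variables (R : realType) (T : finType) (pi g : T -> R) (th : R).
Hypotheses (pi_ge0 : forall x, 0 <= pi x) (pi_sum1 : \sum_x pi x = 1).
Hypothesis th_ge0 : 0 <= th.

Let mgf := \sum_x pi x * expR (th * g x).

Lemma mgf_le_expR c :
  \sum_x pi x * expR (th * g x) * g x <= c * mgf -> mgf <= expR (th * c).
Proof.
move=> tilted.
have pointwise x :
    expR (- (th * c)) * (pi x * expR (th * g x) * (1 + th * (c - g x))) <= pi x.
  have expR_cancel : expR (- (th * c)) * expR (th * g x) * expR (th * (c - g x)) = 1.
    by rewrite -!expRD -expR0; congr expR; ring.
  rewrite [leRHS](_ : pi x = expR (- (th * c)) * (pi x * expR (th * g x))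
                             * expR (th * (c - g x))); last first.
    by rewrite -[LHS]mulr1 -expR_cancel; ring.
  rewrite -[leRHS]mulrA; apply: ler_wpM2l; first exact: expR_ge0.
  by apply: ler_wpM2l; [exact: mulr_ge0 (pi_ge0 x) (expR_ge0 _) | exact: expR_ge1Dx].
have mgf_le : mgf <= \sum_x pi x * expR (th * g x) * (1 + th * (c - g x)).
  rewrite (eq_bigr (fun x => pi x * expR (th * g x)
      + th * (c * (pi x * expR (th * g x)) - pi x * expR (th * g x) * g x))); last first.
    by move=> x _; ring.
  by rewrite big_split /= -mulr_sumr sumrB -mulr_sumr lerDl mulr_ge0 // subr_ge0.
have : expR (- (th * c)) * mgf <= 1.
  rewrite -pi_sum1; apply: le_trans (ler_sum _ (fun x _ => pointwise x)).
  by rewrite -mulr_sumr ler_wpM2l ?expR_ge0.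
by rewrite expRN mulrC ler_pdivrMr ?expR_gt0 // mul1r.
Qed.

Lemma chernoff_tail a : \sum_(x | a < g x) pi x <= expR (- (th * a)) * mgf.
Proof.
apply: (@le_trans _ _ (\sum_(x | a < g x) expR (- (th * a)) * (pi x * expR (th * g x)))).
  apply: ler_sum => x ax; rewrite mulrCA -[leLHS]mulr1 ler_wpM2l //.
  rewrite -expRD -expR0 ler_expR addrC -mulrBr mulr_ge0 // subr_ge0 ltW //.
rewrite -mulr_sumr ler_wpM2l ?expR_ge0 // [leRHS](bigID (fun x => a < g x)) /=.
by rewrite lerDl sumr_ge0 // => x _; rewrite mulr_ge0 ?expR_ge0.
Qed.

Lemma tail_ge_of_tilted_mean a c :
  \sum_x pi x * expR (th * g x) * g x <= c * mgf ->
  1 - expR (- (th * (a - c))) <= \sum_(x | g x <= a) pi x.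
Proof.
move=> tilted.
have tail : \sum_(x | a < g x) pi x <= expR (- (th * (a - c))).
  apply: le_trans (chernoff_tail a) _.
  rewrite (_ : - (th * (a - c)) = - (th * a) + th * c) ?expRD; last by ring.
  by rewrite ler_wpM2l ?expR_ge0 ?mgf_le_expR.
have split : \sum_x pi x = \sum_(x | g x <= a) pi x + \sum_(x | a < g x) pi x.
  rewrite (bigID (fun x => g x <= a)) /=; congr (_ + _).
  by apply: eq_bigl => x; rewrite ltNge.
by move: tail; rewrite -pi_sum1 split; lra.
Qed.

End ExponentialTilting.

Lemma ln_le_sqrt (R : realType) (x : R) : 0 < x -> ln x <= 2 * (Num.sqrt x - 1).
Proof.
move=> x_gt0; have sqrt_gt0 : 0 < Num.sqrt x by rewrite sqrtr_gt0.
have -> : ln x = ln (Num.sqrt x) *+ 2 by rewrite -lnXn // sqr_sqrtr // ltW.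
have := expR_ge1Dx (ln (Num.sqrt x)); rewrite lnK ?posrE // mulr2n; lra.
Qed.

Lemma expR_half_le (R : realType) (t : R) : 0 <= t <= 1 -> expR (t / 2) - 1 <= t.
Proof.
case/andP => t_ge0 t_le1.
have : (1 - t / 2) * expR (t / 2) <= 1.
  rewrite [leRHS](_ : 1 = expR (- (t / 2)) * expR (t / 2)); last first.
    by rewrite -expRD addNr expR0.
  rewrite ler_wpM2r ?expR_ge0 //.
  by have := expR_ge1Dx (- (t / 2)); lra.
have := expR_gt0 (t / 2); nra.
Qed.

Section CoxianParameters.
Variables (R : realType) (mu1 mu2 p : R).
Hypotheses (mu1_gt0 : 0 < mu1) (mu2_gt0 : 0 < mu2) (p_ge0 : 0 <= p) (p_le1 : p <= 1).
Hypothesis unit_mean : 1 / mu1 + p / mu2 = 1.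

Lemma coxian_rates : mu1 * p + mu2 = mu1 * mu2.
Proof. by rewrite -[RHS]mul1r -unit_mean; field; rewrite !gt_eqF. Qed.

Lemma coxian_mul_le_max : mu1 * mu2 <= 2 * Num.max mu1 mu2.
Proof.
have : mu1 * p <= mu1 by rewrite ler_piMr // ltW.
have : mu1 <= Num.max mu1 mu2 by rewrite le_max lexx.
have : mu2 <= Num.max mu1 mu2 by rewrite le_max lexx orbT.
rewrite -coxian_rates; lra.
Qed.

Lemma coxian_balance e : 1 <= e ->
  (e - 1) * mu1 * p <=
  ((e - 1) * mu1 * p + (1 - e^-1) * mu2) * (p / mu2 + (e - 1) / 4).
Proof.
move=> e_ge1; have e_gt0 : 0 < e by lra.
have four_p : 4 * p <= mu1 * mu2.
  rewrite -(ler_pM2l mu1_gt0) -subr_ge0.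
  have -> : mu1 * (mu1 * mu2) - mu1 * (4 * p)
            = mu2 * (mu1 - 2) ^+ 2 - 4 * (mu1 * p + mu2 - mu1 * mu2) by ring.
  by rewrite coxian_rates subrr mulr0 subr0 mulr_ge0 ?sqr_ge0 // ltW.
have einv_le1 : e^-1 <= 1 by rewrite invf_le1.
have einv_gt0 : 0 < e^-1 by rewrite invr_gt0.
have weighted : 0 <= mu1 * p + e^-1 * (mu2 - 4 * p).
  have [mu24p | mu24p] := lerP 0 (mu2 - 4 * p).
    by rewrite addr_ge0 ?mulr_ge0 // ltW.
  have : mu2 - 4 * p <= e^-1 * (mu2 - 4 * p) by rewrite ler_nMl // ltW.
  have := coxian_rates; lra.
rewrite -subr_ge0.
(* The gap is a square times [weighted], plus a multiple of [coxian_rates]. *)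
have -> : ((e - 1) * mu1 * p + (1 - e^-1) * mu2) * (p / mu2 + (e - 1) / 4)
          - (e - 1) * mu1 * p
   = (e - 1) ^+ 2 / 4 * (mu1 * p + e^-1 * (mu2 - 4 * p))
     + (e - 1) * p / mu2 * (mu1 * p + mu2 - mu1 * mu2).
  by field; rewrite !gt_eqF.
rewrite coxian_rates subrr mulr0 addr0.
by rewrite mulr_ge0 // divr_ge0 ?sqr_ge0.
Qed.

Lemma tail_exponent_ge (n t : R) : 1 <= n -> t = ln n / (2 * Num.sqrt n) ->
  mu1 * mu2 * ln n ^+ 2 / (40 * Num.max mu1 mu2)
  <= t / 2 * (n * t - n * ((expR (t / 2) - 1) / 4)).
Proof.
move=> n_ge1; set L := ln n; set sq := Num.sqrt n => t_def.
have sq_gt0 : 0 < sq by rewrite sqrtr_gt0; lra.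
have L_ge0 : 0 <= L by rewrite ln_ge0.
have L_le : L <= 2 * (sq - 1) by apply: ln_le_sqrt; lra.
have t_ge0 : 0 <= t by rewrite t_def divr_ge0 //; lra.
have t_le1 : t <= 1 by rewrite t_def ler_pdivrMr; lra.
have n_t2 : n * t ^+ 2 = L ^+ 2 / 4.
  by rewrite t_def -[in LHS](@sqr_sqrtr _ n) -/sq; [field; rewrite gt_eqF | lra].
have lhs_le : mu1 * mu2 * L ^+ 2 / (40 * Num.max mu1 mu2) <= L ^+ 2 / 20.
  have max_gt0 : 0 < Num.max mu1 mu2 by rewrite lt_max mu1_gt0.
  rewrite ler_pdivrMr ?mulr_gt0 //.
  have : 0 <= L ^+ 2 * (2 * Num.max mu1 mu2 - mu1 * mu2).
    by rewrite mulr_ge0 ?sqr_ge0 // subr_ge0 coxian_mul_le_max.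
  lra.
have rhs_ge : L ^+ 2 / 20 <= t / 2 * (n * t - n * ((expR (t / 2) - 1) / 4)).
  have e_le := expR_half_le (introT andP (conj t_ge0 t_le1)).
  have : 0 <= t * n * (t - (expR (t / 2) - 1)) by rewrite !mulr_ge0 ?subr_ge0 //; lra.
  have := sqr_ge0 L; lra.
exact: le_trans lhs_le rhs_ge.
Qed.

End CoxianParameters.

Lemma tilted_mean_nphase2_le (R : realType) N b (lam mu1 mu2 p th : R)
    (A : state N b -> option (cls b) -> R) (pi : state N b -> R) :
  0 < mu1 -> 0 < mu2 -> 0 <= p -> 1 / mu1 + p / mu2 = 1 ->
  policy_ok A -> stationary (rate lam mu1 mu2 p A) pi -> 0 < th ->
  \sum_x pi x * exp_nphase2 th x * (nphase x ph2)%:R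
  <= N%:R * (p / mu2 + (expR th - 1) / 4) * \sum_x pi x * exp_nphase2 th x.
Proof.
move=> mu1_gt0 mu2_gt0 p_ge0 unit_mean Apol stat th_gt0.
have [pi_ge0 _] := stat.
have e_gt1 : 1 < expR th by rewrite -expR0 ltr_expR.
set u := (expR th - 1) * mu1 * p; set v := (1 - (expR th)^-1) * mu2.
have u_ge0 : 0 <= u by rewrite !mulr_ge0 ?subr_ge0 // ?ltW.
have v_gt0 : 0 < v by rewrite mulr_gt0 // subr_gt0 invf_lt1 // (lt_trans ltr01).
have drift : (u + v) * \sum_x pi x * exp_nphase2 th x * (nphase x ph2)%:R
             <= u * N%:R * \sum_x pi x * exp_nphase2 th x.
  rewrite -subr_ge0 -[leLHS](stationary_generator_mean (exp_nphase2 th) stat).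
  rewrite !mulr_sumr -sumrB.
  apply: ler_sum => x _; rewrite generator_rate_exp_nphase2 // mulrA.
  rewrite [leRHS](_ : _ = pi x * exp_nphase2 th x
                          * (u * N%:R - (u + v) * (nphase x ph2)%:R)); last by ring.
  rewrite ler_wpM2l ?mulr_ge0 ?expR_ge0 // expRN.
  have : 0 <= u * (N%:R - (nphase x ph1)%:R - (nphase x ph2)%:R).
    by rewrite mulr_ge0 // -addrA -opprD subr_ge0 -natrD ler_nat nphase_ph1_ph2_le.
  rewrite -/u /v; lra.
have balance : u <= (u + v) * (p / mu2 + (expR th - 1) / 4).
  exact: coxian_balance (ltW e_gt1).
have M_ge0 : 0 <= \sum_x pi x * exp_nphase2 th x.
  by rewrite sumr_ge0 // => x _; rewrite mulr_ge0 ?expR_ge0.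
rewrite -(ler_pM2l (ltr_wpDl u_ge0 v_gt0)) (le_trans drift) //.
rewrite [leRHS](_ : _ = (u + v) * (p / mu2 + (expR th - 1) / 4)
                        * (N%:R * \sum_x pi x * exp_nphase2 th x)); last by ring.
by rewrite -[leLHS]mulrA ler_wpM2r // mulr_ge0.
Qed.

Theorem lemma6 (R : realType) (N b : nat) (alpha mu1 mu2 p : R)
  (A : state N b -> option (cls b) -> R) (pi : state N b -> R) :
  (0 < N)%N -> (0 < b)%N ->
  0 < alpha -> alpha < 1 / 2 ->
  0 < mu1 -> 0 < mu2 -> 0 <= p -> p < 1 ->
  1 / mu1 + p / mu2 = 1 ->
  let lam := 1 - (N%:R : R) `^ (- alpha) in
  policy_ok A ->
  in_Pi lam mu1 mu2 p A ->
  irreducible (rate lam mu1 mu2 p A) ->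
  stationary (rate lam mu1 mu2 p A) pi ->
  \sum_(x | Sim R x 1 ph2 <= p / mu2 + ln (N%:R : R) / (2 * Num.sqrt (N%:R)))
     pi x
  >= 1 - expR (- (mu1 * mu2 * ln (N%:R : R) ^+ 2) / (40 * Num.max mu1 mu2)).
Proof.
move=> N_gt0 _ _ _ mu1_gt0 mu2_gt0 p_ge0 p_lt1 unit_mean lam Apol _ _ stat.
have [pi_ge0 [pi_sum1 _]] := stat.
have [N_le1 | N_gt1] := leqP N 1.
  have -> : (N%:R : R) = 1 by apply/eqP; rewrite pnatr_eq1 eqn_leq N_le1.
  by rewrite ln1 expr0n /= mulr0 oppr0 mul0r expR0 subrr sumr_ge0.
set t := ln (N%:R : R) / (2 * Num.sqrt N%:R).
have t_gt0 : 0 < t by rewrite divr_gt0 ?ln_gt0 ?ltr1n // mulr_gt0 // sqrtr_gt0 ltr0n.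
rewrite (eq_bigl (fun x => (nphase x ph2)%:R <= (p / mu2 + t) * N%:R)) => [|x]; last first.
  by rewrite Sim1E ler_pdivrMr // ltr0n.
have th_gt0 : 0 < t / 2 by rewrite divr_gt0.
apply: le_trans (tail_ge_of_tilted_mean pi_ge0 pi_sum1 (ltW th_gt0) _
  (tilted_mean_nphase2_le mu1_gt0 mu2_gt0 p_ge0 unit_mean Apol stat th_gt0)).
rewrite lerD2l lerN2 ler_expR mulNr lerN2.
apply: le_trans (tail_exponent_ge mu1_gt0 mu2_gt0 (ltW p_lt1) unit_mean _ erefl) _.
  by rewrite ler1n.
by rewrite -/t; lra.
Qed.
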